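(* Consider the periodic robust learning MPC scheme described in the context, and assume the stage costs $l_t(z,v)$ are continuous, convex and satisfy $l_t(z,v)\ge 0$. Then at every iteration $j\ge1$ and every $t\in\{0,1,\dots,T-N\}$, the closed-loop cumulative cost $J^j(z_t^j)=\sum_{k=t}^T l_k(z_k^j,v_k^j)$ satisfies $J^j(z_t^j)\le J_{t|t'}^{i,j}(z_{t|t'}^{i,j})$ for every shifted state $z_{t|t'}^{i,j}\in\mathbb{SS}_t^j$ with $z_{t|t'}^{i,j}=z_t^j$. In particular, if $\theta^j\in\mathbb{W}_0^i$ for some $i\in\{0,\dots,j-1\}$, then $J^j(z_0^j)\le J_{0|0}^{i,j}(z_0^j)$.
   Context: Let $T\in\mathbb{N}$ be the period/task length and $N\le T$ the prediction horizon; $\mathbb{N}_a^b=\{a,a+1,\dots,b\}$. For $t\in\mathbb{N}_0^T$ let $A_t\in\mathbb{R}^{n\times n}$, $B_t\in\mathbb{R}^{n\times m}$, $C_t\in\mathbb{R}^{n\times d}$ be given, together with tightened constraint data $\bar F_t,\bar G_t,\bar f_t$ (polytopic constraints $\bar F_t z+\bar G_t v\le \bar f_t$), gains $K_t$ and $\Phi_t=A_t+B_tK_t$. Let $(\theta,t)\mapsto w_{\theta,t}\in\mathbb{R}^d$ be a given (known) parametrized disturbance profile, with parameters $\theta$ ranging in a set $\mathbb{W}_\theta$. Each iteration $j=0,1,2,\dots$ has a parameter $\theta^j\in\mathbb{W}_\theta$, known at iteration $j$, and nominal dynamics $z_{k+1}=A_kz_k+B_kv_k+C_kw_{\theta^j,k}$,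 all iterations starting from $z_0^j=x_s$. Standing assumption: a closed-loop trajectory $\{\mathbf{z}^0,\mathbf{v}^0\}$ of iteration $0$ (parameter $\theta^0$) is given satisfying the nominal dynamics and tightened constraints, and $\mathbb{W}_t^0\supseteq\mathbb{W}_\theta$ for all $t$; at each solved LMPC problem an optimal solution is selected. Shifting: for a past iteration $i$ with recorded closed-loop states $\mathbf{z}^i=[z_0^i,\dots,z_T^i]$, inputs $\mathbf{v}^i=[v_0^i,\dots,v_T^i]$ and parameter $\theta^i$, a parameter $\theta$ and a start time $t$, define $e_{t|t}=0$, $e_{k+1|t}=\Phi_k e_{k|t}+C_k(w_{\theta,k}-w_{\theta^i,k})$, $v_{k|t}=v_k^i+K_ke_{k|t}$, $z_{k|t}=z_k^i+e_{k|t}$ for $k\in\mathbb{N}_t^T$; when $\theta=\theta^j$ these are denoted $z_{k|t}^{i,j},v_{k|t}^{i,j}$. The feasible disturbance set $\mathbb{W}_t^i$ is the set of $\theta$ for which the resulting shifted pairs satisfy $\bar F_k z_{k|t}+\bar G_k v_{k|t}\le \bar f_k$ for all $k\in\mathbb{N}_t^T$. Safe sets and cost-to-go at iteration $j$: $\mathbb{SS}_k^j=\{z_{k|t}^{i,j}: i\in\mathbb{N}_0^{j-1},\ t\in\mathbb{N}_0^k,\ \theta^j\in\mathbb{W}_t^i\}$ (a finite set of points), shifted costs $J_{k|t}^{i,j}(z_{k|t}^{i,j})=\sum_{r=k}^T l_r(z_{r|t}^{i,j},v_{r|t}^{i,j})$, and $Q_k^j(z)=\min\{J_{k|t}^{i,j}: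 i\in\mathbb{N}_0^{j-1}, t\in\mathbb{N}_0^k, \theta^j\in\mathbb{W}_t^i, z_{k|t}^{i,j}=z\}$ if $z\in\mathbb{SS}_k^j$, and $Q_k^j(z)=+\infty$ otherwise. LMPC problem at time $t\in\mathbb{N}_0^{T-N}$ of iteration $j$, given current nominal state $z_t^j$: minimize $\sum_{k=t}^{t+N-1}l_k(z_{k|t},v_{k|t})+Q_{t+N}^j(z_{t+N|t})$ over $v_{t|t},\dots,v_{t+N-1|t}$ subject to $z_{t|t}=z_t^j$, $z_{k+1|t}=A_kz_{k|t}+B_kv_{k|t}+C_kw_{\theta^j,k}$, $\bar F_kz_{k|t}+\bar G_kv_{k|t}\le\bar f_k$ for $k\in\mathbb{N}_t^{t+N-1}$, and $z_{t+N|t}\in\mathbb{SS}_{t+N}^j$. With optimal inputs $v^{j,*}_{k|t}$, the closed-loop input is $v_t^j=v_{t|t}^{j,*}$ if $t+N\le T$ and $v_t^j=v_{t|T-N}^{j,*}$ if $t+N>T$, and $z_{t+1}^j=A_tz_t^j+B_tv_t^j+C_tw_{\theta^j,t}$. The closed-loop $\{\mathbf{z}^j,\mathbf{v}^j\}$ together with $\theta^j$ is recorded and used as historical data for later iterations. *)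

From HB Require Import structures.
From mathcomp Require Import all_boot all_order all_algebra.
From mathcomp Require Import all_classical all_reals all_analysis.
Set Implicit Arguments. Unset Strict Implicit. Unset Printing Implicit Defensive.
Import Order.TTheory GRing.Theory Num.Theory.
Import numFieldNormedType.Exports.
Local Open Scope classical_set_scope.
Local Open Scope ring_scope.

Record lmpc_data (R : realType) (n m d : nat) (Theta : Type) := LmpcData {
  T_ : nat;
  N_ : nat;                                  (* prediction horizon *)
  A_ : nat -> 'M[R]_n;
  B_ : nat -> 'M[R]_(n, m);
  C_ : nat -> 'M[R]_(n, d);
  K_ : nat -> 'M[R]_(m, n);
  q_ : nat -> nat;
  Fb_ : forall t, 'M[R]_(q_ t, n);
  Gb_ : forall t, 'M[R]_(q_ t, m);
  fb_ : forall t, 'cV[R]_(q_ t);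
  w_ : Theta -> nat -> 'cV[R]_d
}.

Section LMPC.
Variables (R : realType) (n m d : nat) (Theta : Type).
Variable S : lmpc_data R n m d Theta.
(* recorded closed-loop data: zc j k, vc j k = state/input at time k of iteration j;
   theta j = parameter of iteration j *)
Variables (zc : nat -> nat -> 'cV[R]_n) (vc : nat -> nat -> 'cV[R]_m)
          (theta : nat -> Theta).
Variable l : nat -> 'cV[R]_n -> 'cV[R]_m -> R.

Definition Phi (t : nat) : 'M[R]_n := A_ S t + B_ S t *m K_ S t.

Definition cons_ok (t : nat) (z : 'cV[R]_n) (v : 'cV[R]_m) : Prop :=
  forall r : 'I_(q_ S t), (Fb_ S t *m z + Gb_ S t *m v) r 0 <= fb_ S t r 0.

Definition nom_step (th : Theta) (k : nat) (z : 'cV[R]_n) (v : 'cV[R]_m) : 'cV[R]_n :=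
  A_ S k *m z + B_ S k *m v + C_ S k *m w_ S th k.

(* error of the shifting: err i th t s = e_{t+s|t} for past iteration i,
   parameter th and start time t *)
Fixpoint shift_err (i : nat) (th : Theta) (t s : nat) : 'cV[R]_n :=
  match s with
  | 0 => 0
  | s'.+1 => Phi (t + s') *m shift_err i th t s'
             + C_ S (t + s') *m (w_ S th (t + s') - w_ S (theta i) (t + s'))
  end.

(* shifted states / inputs z_{k|t}, v_{k|t} (meaningful for t <= k <= T) *)
Definition shift_z (i : nat) (th : Theta) (t k : nat) : 'cV[R]_n :=
  zc i k + shift_err i th t (k - t).
Definition shift_v (i : nat) (th : Theta) (t k : nat) : 'cV[R]_m :=
  vc i k + K_ S k *m shift_err i th t (k - t).

Definition Wset (i t : nat) : set Theta :=
  [set th | forall k, (t <= k <= T_ S)%N ->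
              cons_ok k (shift_z i th t k) (shift_v i th t k)].

Definition Jshift (i : nat) (th : Theta) (t k : nat) : R :=
  \sum_(k <= r < (T_ S).+1) l r (shift_z i th t r) (shift_v i th t r).

Definition valid_idx (j i t k : nat) : Prop :=
  [/\ (i < j)%N, (t <= k)%N & Wset i t (theta j)].

Definition SS (j k : nat) : set 'cV[R]_n :=
  [set z | exists i t, valid_idx j i t k /\ shift_z i (theta j) t k = z].

(* cost-to-go Q_k^j : minimum over a finite set, +oo if empty *)
Definition Qctg (j k : nat) (z : 'cV[R]_n) : \bar R :=
  ereal_inf [set x : \bar R | exists i t,
     [/\ valid_idx j i t k, shift_z i (theta j) t k = z &
         x = (Jshift i (theta j) t k)%:E]].

(* predicted state of the LMPC problem at time t of iteration j,
   from initial state z0 with inputs u (indexed by absolute time):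
   pred_z j t z0 u s = z_{t+s|t} *)
Fixpoint pred_z (j t : nat) (z0 : 'cV[R]_n) (u : nat -> 'cV[R]_m) (s : nat)
  : 'cV[R]_n :=
  match s with
  | 0 => z0
  | s'.+1 => nom_step (theta j) (t + s') (pred_z j t z0 u s') (u (t + s'))
  end.

Definition lmpc_feasible (j t : nat) (z0 : 'cV[R]_n) (u : nat -> 'cV[R]_m) : Prop :=
  (forall s, (s < N_ S)%N -> cons_ok (t + s) (pred_z j t z0 u s) (u (t + s))) /\
  SS j (t + N_ S) (pred_z j t z0 u (N_ S)).

Definition lmpc_cost (j t : nat) (z0 : 'cV[R]_n) (u : nat -> 'cV[R]_m) : \bar R :=
  (\sum_(s < N_ S) l (t + s) (pred_z j t z0 u s) (u (t + s)))%:E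
  + Qctg j (t + N_ S) (pred_z j t z0 u (N_ S)).

Definition lmpc_optimal (j t : nat) (z0 : 'cV[R]_n) (u : nat -> 'cV[R]_m) : Prop :=
  lmpc_feasible j t z0 u /\
  forall u', lmpc_feasible j t z0 u' -> (lmpc_cost j t z0 u <= lmpc_cost j t z0 u')%E.

Definition Jcl (j t : nat) : R :=
  \sum_(t <= k < (T_ S).+1) l k (zc j k) (vc j k).

(* The closed loop (zc, vc, theta) is generated by the periodic robust LMPC
   scheme, vstar j t being the optimal solution selected at time t of
   iteration j (inputs indexed by absolute time). *)
Definition lmpc_closed_loop (Wtheta : set Theta) (xs : 'cV[R]_n)
  (vstar : nat -> nat -> nat -> 'cV[R]_m) : Prop :=
  [/\
      (forall j, zc j 0 = xs /\ Wtheta (theta j)),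
      (forall k, (k < T_ S)%N -> zc 0 k.+1 = nom_step (theta 0) k (zc 0 k) (vc 0 k))
      /\ (forall k, (k <= T_ S)%N -> cons_ok k (zc 0 k) (vc 0 k)),
      (forall t, Wtheta `<=` Wset 0 t),
      (forall j t, (1 <= j)%N -> (t <= T_ S - N_ S)%N ->
         lmpc_optimal j t (zc j t) (vstar j t)) &
      (forall j, (1 <= j)%N ->
         [/\ (forall t, (t <= T_ S - N_ S)%N -> vc j t = vstar j t t),
             (forall t, ((T_ S - N_ S)%N < t < T_ S)%N ->
                vc j t = vstar j (T_ S - N_ S)%N t),
             (forall t, (t < T_ S)%N ->
                zc j t.+1 = nom_step (theta j) t (zc j t) (vc j t)) &
             (* the input at the final time T is the one of the shifted
                trajectory attaining the terminal cost Q_T^j(z_T^j) *)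
             exists i t', [/\ valid_idx j i t' (T_ S),
                shift_z i (theta j) t' (T_ S) = zc j (T_ S),
                Qctg j (T_ S) (zc j (T_ S)) = (Jshift i (theta j) t' (T_ S))%:E &
                vc j (T_ S) = shift_v i (theta j) t' (T_ S)]])].

End LMPC.

Definition convex_cost (R : realType) (n m : nat)
  (f : 'cV[R]_n -> 'cV[R]_m -> R) : Prop :=
  forall (a : R) z1 z2 v1 v2, 0 <= a <= 1 ->
    f (a *: z1 + (1 - a) *: z2) (a *: v1 + (1 - a) *: v2)
    <= a * f z1 v1 + (1 - a) * f z2 v2.

From HB Require Import structures.
From mathcomp Require Import all_boot all_order all_algebra.
From mathcomp Require Import all_classical all_reals all_analysis.
From mathcomp Require Import zify.
Set Implicit Arguments.
Unset Strict Implicit.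
Unset Printing Implicit Defensive.
Import Order.TTheory GRing.Theory Num.Theory.
Import numFieldNormedType.Exports.
Local Open Scope classical_set_scope.
Local Open Scope ring_scope.

(* Let V_t be the optimal value of the LMPC problem at time t of iteration j.
   Shifting a stored trajectory to the parameter theta^j keeps it a solution
   of the nominal dynamics, so a stored trajectory through z_t^j provides a
   feasible input sequence of cost at most J_{t|t'}: V_t <= J_{t|t'}.
   Conversely, the optimal inputs at time t shifted by one step and completed
   by the input of a stored trajectory reaching their terminal state are
   feasible at time t+1, whence l_t(z_t, v_t) + V_{t+1} <= V_t; at t = T-N the
   closed loop follows the last optimal plan, so J^j(z_{T-N}) = V_{T-N}.
   Backward induction gives J^j(z_t) <= V_t <= J_{t|t'}. *)

Lemma big_nat_offset (V : nmodType) (F : nat -> V) (t N : nat) :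
  \sum_(t <= r < t + N) F r = \sum_(s < N) F (t + s)%N.
Proof.
rewrite -{1}[t]add0n big_addn addKn big_mkord.
by apply: eq_bigr => s _; rewrite addnC.
Qed.

Lemma big_ord_slide (V : nmodType) (F G : nat -> V) (N : nat) :
  (0 < N)%N -> (forall s, (s.+1 < N)%N -> G s = F s.+1) ->
  \sum_(s < N) F s + G N.-1 = F 0%N + \sum_(s < N) G s.
Proof.
case: N => // N _ hFG; rewrite big_ord_recl big_ord_recr /= addrA.
by congr (_ + _ + _); apply: eq_bigr => s _; rewrite hFG ?ltnS ?ltn_ord.
Qed.

Section Shifting.
Variables (R : realType) (n m d : nat) (Theta : Type).
Variable S : lmpc_data R n m d Theta.
Variables (zc : nat -> nat -> 'cV[R]_n) (vc : nat -> nat -> 'cV[R]_m)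
          (theta : nat -> Theta).
Variable l : nat -> 'cV[R]_n -> 'cV[R]_m -> R.

Local Notation T := (T_ S).
Local Notation N := (N_ S).
Local Notation zs := (shift_z S zc theta).
Local Notation vs := (shift_v S vc theta).
Local Notation zpred := (pred_z S theta).
Local Notation valid := (valid_idx S zc vc theta).
Local Notation J := (Jshift S zc vc theta l).
Local Notation cost := (lmpc_cost S zc vc theta l).
Local Notation feasible := (lmpc_feasible S zc vc theta).

Definition nominal_run (i : nat) : Prop :=
  forall k, (k < T)%N -> zc i k.+1 = nom_step S (theta i) k (zc i k) (vc i k).

Lemma shift_z_start i th t : zs i th t t = zc i t.
Proof. by rewrite /shift_z subnn addr0. Qed.

Lemma shift_z_step i th t k :
  (t <= k)%N -> zc i k.+1 = nom_step S (theta i) k (zc i k) (vc i k) ->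
  zs i th t k.+1 = nom_step S th k (zs i th t k) (vs i th t k).
Proof.
move=> htk hk; rewrite /shift_z /shift_v hk subSn //= subnKC //.
rewrite /nom_step /Phi !mulmxDr !mulmxDl mulmxN !mulmxA.
set wi := C_ S k *m w_ S (theta i) k.
by rewrite addrACA [wi + _]addrC subrK addrACA.
Qed.

(* [pred_z] adds time indices with the ring addition of [nat]; [natrDE]
   turns it back into [addn]. *)
Lemma pred_z_shift j i t' t :
  nominal_run i -> (t' <= t)%N ->
  forall s, (t + s <= T)%N ->
  zpred j t (zs i (theta j) t' t) (vs i (theta j) t') s
  = zs i (theta j) t' (t + s).
Proof.
move=> hrun htt; elim=> [|s IH] hs /=; first by rewrite addn0.
rewrite IH; last by lia.
by rewrite natrDE addnS -shift_z_step //; [lia | apply: hrun; lia].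
Qed.

(* The LMPC objective with the terminal cost replaced by the shifted cost of
   the stored trajectory (i, t'); [lmpc_cost] is its infimum over (i, t'). *)
Definition lmpc_cost_via (j t : nat) (z : 'cV[R]_n) (u : nat -> 'cV[R]_m)
    (i t' : nat) : R :=
  \sum_(s < N) l (t + s) (zpred j t z u s) (u (t + s))
  + J i (theta j) t' (t + N).

Lemma lmpc_cost_le_via j t z u i t' :
  valid j i t' (t + N) -> zs i (theta j) t' (t + N) = zpred j t z u N ->
  (cost j t z u <= (lmpc_cost_via j t z u i t')%:E)%E.
Proof.
move=> hv hz; rewrite /lmpc_cost /lmpc_cost_via EFinD leeD2l //.
by apply: ereal_inf_lbound; exists i, t'.
Qed.

Lemma le_lmpc_cost j t z u (x : \bar R) :
  (forall i t', valid j i t' (t + N) ->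
     zs i (theta j) t' (t + N) = zpred j t z u N ->
     (x <= (lmpc_cost_via j t z u i t')%:E)%E) ->
  (x <= cost j t z u)%E.
Proof.
move=> hx; rewrite /lmpc_cost -leeBlDl //.
apply: le_ereal_inf_tmp => _ [i [t' [hv hz ->]]].
by rewrite leeBlDl // -EFinD; apply: hx.
Qed.

Lemma shift_feasible j i t' t :
  nominal_run i -> (t + N <= T)%N -> valid j i t' t ->
  feasible j t (zs i (theta j) t' t) (vs i (theta j) t').
Proof.
move=> hrun htN [hij htt hW]; split.
  move=> s hs; rewrite pred_z_shift //; last by lia.
  by apply: hW; lia.
exists i, t'; split; first by split => //; lia.
by rewrite pred_z_shift.
Qed.

Lemma lmpc_cost_via_shift j i t' t :
  nominal_run i -> (t' <= t)%N -> (t + N <= T)%N ->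
  lmpc_cost_via j t (zs i (theta j) t' t) (vs i (theta j) t') i t'
  = J i (theta j) t' t.
Proof.
move=> hrun htt htN.
rewrite /lmpc_cost_via /Jshift [RHS](@big_cat_nat _ _ _ (t + N)) /=; [|lia|lia].
rewrite big_nat_offset; congr (_ + _); apply: eq_bigr => s _.
by rewrite pred_z_shift //; have := ltn_ord s; lia.
Qed.

Section Candidate.
Variables (j t : nat) (z : 'cV[R]_n) (u : nat -> 'cV[R]_m) (i t' : nat).
Hypotheses (hN0 : (0 < N)%N) (htN : (t + N < T)%N) (hrun : nominal_run i).
Hypotheses (hv : valid j i t' (t + N))
           (hz : zs i (theta j) t' (t + N) = zpred j t z u N).

Local Notation z' := (nom_step S (theta j) t z (u t)).
Local Notation u' := [eta u with (t + N)%N |-> vs i (theta j) t' (t + N)%N].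

Lemma pred_z_candidate s :
  (s < N)%N -> zpred j t.+1 z' u' s = zpred j t z u s.+1.
Proof.
elim: s => [|s IH] hs /=; first by rewrite !natrDE !addn0.
by rewrite IH ?(ltnW hs) // !natrDE addSnnS eqn_add2l ltn_eqF.
Qed.

Lemma pred_z_candidate_last :
  zpred j t.+1 z' u' N = zs i (theta j) t' (t.+1 + N).
Proof.
have [_ ht' _] := hv.
rewrite -[X in zpred _ _ _ _ X](prednK hN0) /= pred_z_candidate ?prednK //.
rewrite natrDE addSnnS prednK // eqxx -hz addSn shift_z_step //.
exact: hrun.
Qed.

Lemma candidate_feasible : feasible j t z u -> feasible j t.+1 z' u'.
Proof.
move=> [hu _]; have [hij ht' hW] := hv; split; last first.
  exists i, t'; split; last by rewrite pred_z_candidate_last.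
  by split=> //; lia.
move=> s hs; rewrite pred_z_candidate // natrDE addSnnS.
have [hsN|->] : (s.+1 < N)%N \/ s.+1 = N by lia.
  rewrite /= ifF; last by lia.
  by have := hu _ hsN; rewrite natrDE.
by rewrite /= eqxx -hz; apply: hW; lia.
Qed.

Lemma lmpc_cost_via_candidate :
  lmpc_cost_via j t z u i t' = l t z (u t) + lmpc_cost_via j t.+1 z' u' i t'.
Proof.
have [_ ht' _] := hv.
pose F s := l (t + s)%N (zpred j t z u s) (u (t + s)%N).
pose G s := l (t.+1 + s)%N (zpred j t.+1 z' u' s) (u' (t.+1 + s)%N).
have hJ : J i (theta j) t' (t + N) = G N.-1 + J i (theta j) t' (t.+1 + N).
  rewrite /Jshift big_ltn ?natrDE ?addSn; last by lia.
  by rewrite /G pred_z_candidate ?prednK // -hz /= addSnnS prednK // eqxx.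
have hFG s : (s.+1 < N)%N -> G s = F s.+1.
  move=> hs; rewrite /G /F pred_z_candidate; last by lia.
  by rewrite /= ifF addSnnS //; lia.
rewrite /lmpc_cost_via hJ addrA (big_ord_slide hN0 hFG) -addrA.
by rewrite /F addn0.
Qed.

End Candidate.

Section ClosedLoop.
Variables (Wtheta : set Theta) (xs : 'cV[R]_n)
          (vstar : nat -> nat -> nat -> 'cV[R]_m).
Hypotheses (hN0 : (0 < N)%N) (hNT : (N <= T)%N).
Hypothesis hcl : lmpc_closed_loop S zc vc theta l Wtheta xs vstar.

Lemma closed_loop_nominal i : nominal_run i.
Proof.
have [_ [hdyn0 _] _ _ hit] := hcl.
case: i => [|i] k hk; first exact: hdyn0.
by have [_ _ hdyn _] := hit i.+1 isT; apply: hdyn.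
Qed.

Variable j : nat.
Hypothesis hj : (1 <= j)%N.

Local Notation V t := (cost j t (zc j t) (vstar j t)).

Lemma lmpc_cost_le_Jshift t i t' :
  (t <= T - N)%N -> valid j i t' t -> zs i (theta j) t' t = zc j t ->
  (V t <= (J i (theta j) t' t)%:E)%E.
Proof.
move=> ht hv hz; have [_ _ _ hopt _] := hcl; have [_ hmin] := hopt j t hj ht.
have [hij htt hW] := hv; have htN : (t + N <= T)%N by rewrite addnC -leq_subRL.
have hrun := closed_loop_nominal i.
rewrite -(lmpc_cost_via_shift j hrun htt htN) -hz in hmin *.
apply: le_trans (hmin _ (shift_feasible hrun htN hv)) _.
apply: lmpc_cost_le_via; last by rewrite pred_z_shift.
by split=> //; apply: leq_trans htt (leq_addr _ _).
Qed.

Lemma Jcl_last_window : (Jcl S zc vc l j (T - N))%:E = V (T - N).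
Proof.
have [_ _ _ _ hit] := hcl.
have [hv1 hv2 hdyn [i [t' [_ hzT hQ hvT]]]] := hit j hj.
have eT : (T - N + N)%N = T by rewrite subnK.
have hu s : (s < N)%N -> vc j (T - N + s)%N = vstar j (T - N) (T - N + s)%N.
  case: s => [|s] hs; first by rewrite addn0 hv1.
  by rewrite hv2 //; lia.
have hz s : (s <= N)%N ->
    zc j (T - N + s)%N = zpred j (T - N) (zc j (T - N)) (vstar j (T - N)) s.
  elim: s => [|s IH] hs /=; first by rewrite addn0.
  by rewrite -IH ?natrDE -?hu ?addnS -?hdyn //; lia.
rewrite /lmpc_cost /Jcl big_nat_recr /=; last by lia.
rewrite -[X in \sum_(_ <= _ < X) _]eT big_nat_offset EFinD -hz // eT hQ.
congr (_%:E + _%:E)%E.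
  by apply: eq_bigr => s _; rewrite -(hz s) ?(hu s) // ltnW.
by rewrite /Jshift big_ltn // big_geq // addr0 hzT hvT.
Qed.

Lemma lmpc_cost_decrease t :
  (t < T - N)%N -> ((l t (zc j t) (vc j t))%:E + V t.+1 <= V t)%E.
Proof.
move=> ht; have [_ _ _ hopt hit] := hcl; have [hv1 _ hdyn _] := hit j hj.
have [hfeas _] := hopt j t hj (ltnW ht); have [_ hmin] := hopt j t.+1 hj ht.
have htN : (t + N < T)%N by lia.
rewrite (hv1 t (ltnW ht)); apply: le_lmpc_cost => i t' hv hz.
rewrite (lmpc_cost_via_candidate hN0 htN hv hz) EFinD leeD2l //.
rewrite (hdyn t) ?(hv1 t (ltnW ht)) in hmin *; last by lia.
have hrun := closed_loop_nominal i.
apply: le_trans (hmin _ (candidate_feasible hN0 htN hrun hv hz hfeas)) _.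
have hlast := pred_z_candidate_last hN0 htN hrun hv hz.
apply: lmpc_cost_le_via; last by rewrite hlast.
by have [? ? ?] := hv; split=> //; lia.
Qed.

Lemma Jcl_le_lmpc_cost t :
  (t <= T - N)%N -> ((Jcl S zc vc l j t)%:E <= V t)%E.
Proof.
move=> ht; have := subnKC ht; move: (T - N - t)%N => k.
elim: k t {ht} => [|k IH] t htk.
  by move: htk; rewrite addn0 => ->; rewrite Jcl_last_window.
have ht : (t < T - N)%N by lia.
apply: le_trans (lmpc_cost_decrease ht).
rewrite /Jcl big_ltn; last by lia.
by rewrite EFinD leeD2l // IH //; lia.
Qed.

End ClosedLoop.
End Shifting.

Theorem theorem2 (R : realType) (n m d : nat) (Theta : Type)
  (S : lmpc_data R n m d Theta)
  (zc : nat -> nat -> 'cV[R]_n) (vc : nat -> nat -> 'cV[R]_m)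
  (theta : nat -> Theta) (l : nat -> 'cV[R]_n -> 'cV[R]_m -> R)
  (Wtheta : set Theta) (xs : 'cV[R]_n)
  (vstar : nat -> nat -> nat -> 'cV[R]_m) :
  (0 < N_ S)%N -> (N_ S <= T_ S)%N ->
  (forall t, continuous (fun p : 'cV[R]_n * 'cV[R]_m => l t p.1 p.2)) ->
  (forall t, convex_cost (l t)) ->
  (forall t z v, 0 <= l t z v) ->
  lmpc_closed_loop S zc vc theta l Wtheta xs vstar ->
  forall j, (1 <= j)%N ->
  (forall t, (t <= T_ S - N_ S)%N ->
     forall i t', valid_idx S zc vc theta j i t' t ->
       shift_z S zc theta i (theta j) t' t = zc j t ->
       Jcl S zc vc l j t <= Jshift S zc vc theta l i (theta j) t' t)
  /\
  (forall i, (i < j)%N -> Wset S zc vc theta i 0 (theta j) ->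
     Jcl S zc vc l j 0 <= Jshift S zc vc theta l i (theta j) 0 0).
Proof.
move=> hN0 hNT _ _ _ hcl j hj.
have Jcl_le_Jshift t : (t <= T_ S - N_ S)%N ->
    forall i t', valid_idx S zc vc theta j i t' t ->
      shift_z S zc theta i (theta j) t' t = zc j t ->
      Jcl S zc vc l j t <= Jshift S zc vc theta l i (theta j) t' t.
  move=> ht i t' hv hz; rewrite -lee_fin.
  exact: le_trans (Jcl_le_lmpc_cost hN0 hNT hcl hj ht)
                  (lmpc_cost_le_Jshift hNT hcl hj ht hv hz).
split=> // i hi hW; have [hinit _ _ _ _] := hcl.
apply: (Jcl_le_Jshift 0%N (leq0n _) i 0%N); first by split.
by rewrite shift_z_start (hinit i).1 (hinit j).1.
Qed.
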